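(* Let $A$ be a commutative subalgebra of a $K$-algebra $E$, $A'$ a non-empty subset of $A$, $\Delta=\{\mathrm{ad}_a\mid a\in A'\}$, and $R$ a subalgebra of $N_\Delta(E)$ with $A\subseteq R$. Then: (1) $R$ is a $\Delta$-locally nilpotent algebra and $\{R_i=R\cap N_\Delta(E)_i\}_{i\geq0}$ is its $\Delta$-order filtration. (2) If $\mathfrak{a}$ is a nonzero ideal of $R$, then $\mathfrak{a}_0=\mathfrak{a}\cap R_0=\mathfrak{a}\cap R^\Delta$ is a nonzero ideal of $R_0=R^\Delta\supseteq A$ such that $R\mathfrak{a}_0R\cap R_0=\mathfrak{a}_0$. (3) If, in addition, $R_0=R^\Delta$ is commutative, then $[R_1,\mathfrak{a}_0]\subseteq\mathfrak{a}_0$.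
   Context: $\mathrm{ad}_a(f)=af-fa$. For $i\ge1$, $\Delta^i=\{\delta_1\cdots\delta_i\mid\delta_j\in\Delta\}$. For an algebra $B$ on which $\Delta$ acts by derivations, $N_\Delta(B)_i=\{b\in B\mid\Delta^{i+1}b=0\}$ ($i\ge0$), $N_\Delta(B)=\bigcup_iN_\Delta(B)_i$; $B$ is $\Delta$-locally nilpotent if $B=N_\Delta(B)$, and then $\{N_\Delta(B)_i\}_{i\ge0}$ is its $\Delta$-order filtration. $B^\Delta=\bigcap_{\delta\in\Delta}\ker\delta$. *)

From mathcomp Require Import all_boot all_order all_algebra.
Set Implicit Arguments. Unset Strict Implicit. Unset Printing Implicit Defensive.
Import GRing.Theory.
Local Open Scope ring_scope.

Section Defs.
Variables (K : fieldType) (E : algType K).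

Definition ad (a f : E) : E := a * f - f * a.

Definition ad_seq (s : seq E) (b : E) : E := foldr ad b s.

Definition is_subalg (S : E -> Prop) : Prop :=
  [/\ S 0, S 1, (forall x y, S x -> S y -> S (x + y)),
      (forall (k : K) x, S x -> S (k *: x)) &
      (forall x y, S x -> S y -> S (x * y))].

Definition is_comm (S : E -> Prop) : Prop :=
  forall x y, S x -> S y -> x * y = y * x.

Definition is_ideal (B I : E -> Prop) : Prop :=
  (forall x, I x -> B x) /\
  [/\ I 0, (forall x y, I x -> I y -> I (x + y)),
      (forall x y, I x -> I y -> I (x - y)),
      (forall r x, B r -> I x -> I (r * x)) &
      (forall r x, B r -> I x -> I (x * r))].

Definition nonzero_set (I : E -> Prop) : Prop := exists x, I x /\ x != 0.

(* Delta = {ad_a | a in A'};  b is killed by Delta^(i+1) *)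
Definition NE (A' : E -> Prop) (i : nat) (b : E) : Prop :=
  forall s : seq E, size s = i.+1 -> (forall a, a \in s -> A' a) ->
    ad_seq s b = 0.

Definition NEall (A' : E -> Prop) (b : E) : Prop := exists i, NE A' i b.

Definition Delta_stable (A' B : E -> Prop) : Prop :=
  forall a b, A' a -> B b -> B (ad a b).

Definition NB (A' B : E -> Prop) (i : nat) (b : E) : Prop :=
  B b /\ NE A' i b.

Definition Delta_loc_nilp (A' B : E -> Prop) : Prop :=
  Delta_stable A' B /\ forall b, B b -> exists i, NB A' B i b.

Definition Delta_inv (A' B : E -> Prop) (b : E) : Prop :=
  B b /\ forall a, A' a -> ad a b = 0.

Definition gen_ideal (R I : E -> Prop) (y : E) : Prop :=
  exists n (r x t : 'I_n -> E),
    (forall j, R (r j) /\ I (x j) /\ R (t j)) /\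
    y = \sum_(j < n) r j * x j * t j.

End Defs.

(* The adjoint actions [ad_a], [a] in the commutative algebra [A], are derivations of [E] that
   vanish on [A]; hence their common kernel [R^Delta] is a subalgebra of [R] containing [A], and
   an ideal of [R] meets it in an ideal of [R^Delta].  An ideal is stable under every [ad_a], so
   starting from a nonzero element of Delta-order [i] and applying some [ad_a] that does not kill
   it lowers the order, until a nonzero Delta-constant is reached.  For (3), when [ad_a x = 0],
   [ad_a] of [r x - x r] is [ad_a(r) x - x ad_a(r)], and [ad_a(r)] lies in the commutative [R_0]. *)
From mathcomp Require Import all_boot all_order all_algebra.
From Stdlib Require Import Classical.
Import GRing.Theory.
Local Open Scope ring_scope.
Set Implicit Arguments. Unset Strict Implicit.

Section Adjoint.
Variables (K : fieldType) (E : algType K).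
Implicit Types (a b r x y : E) (S I R : E -> Prop).

Lemma ad0 a : ad a 0 = 0.
Proof. by rewrite /ad mulr0 mul0r subrr. Qed.

Lemma adD a x y : ad a (x + y) = ad a x + ad a y.
Proof. by rewrite /ad mulrDl mulrDr opprD addrACA. Qed.

Lemma adB a x y : ad a (x - y) = ad a x - ad a y.
Proof. by rewrite /ad mulrBl mulrBr !opprB addrACA [RHS]addrACA (addrC (- (x * a))). Qed.

Lemma adZ a (k : K) x : ad a (k *: x) = k *: ad a x.
Proof. by rewrite /ad -scalerAr -scalerAl scalerBr. Qed.

Lemma adM a x y : ad a (x * y) = ad a x * y + x * ad a y.
Proof. by rewrite /ad mulrBl mulrBr !mulrA addrA subrK. Qed.

Lemma ad_comm a b : GRing.comm a b -> ad a b = 0.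
Proof. by rewrite /ad => ->; rewrite subrr. Qed.

Lemma ad_ad a r x : ad a (ad r x) = ad (ad a r) x + ad r (ad a x).
Proof.
rewrite -[ad r x]/(r * x - x * r) adB !adM.
by set u := ad a r; set v := ad a x; rewrite /ad opprD [- _ - _]addrC addrACA.
Qed.

Lemma subalgB S x y : is_subalg S -> S x -> S y -> S (x - y).
Proof. by case=> _ _ SD SZ _ Sx Sy; rewrite -scaleN1r; apply: SD (SZ _ _ Sy). Qed.

Lemma subalg_ad S a x : is_subalg S -> S a -> S x -> S (ad a x).
Proof. by move=> subS Sa Sx; have [_ _ _ _ SM] := subS; apply: subalgB => //; apply: SM. Qed.

Lemma subalgI S S' : is_subalg S -> is_subalg S' -> is_subalg (fun x => S x /\ S' x).
Proof.
case=> S0 S1 SD SZ SM [S'0 S'1 S'D S'Z S'M]; split=> [//|//|x y|k x|x y] [? ?] //.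
- by move=> [? ?]; split; [apply: SD | apply: S'D].
- by split; [apply: SZ | apply: S'Z].
- by move=> [? ?]; split; [apply: SM | apply: S'M].
Qed.

Lemma ideal_ad R I a x : is_ideal R I -> R a -> I x -> I (ad a x).
Proof. by case=> _ [_ _ IB Il Ir] Ra Ix; apply: IB; [apply: Il | apply: Ir]. Qed.

Lemma ideal_restrict R S I :
  is_subalg S -> (forall x, S x -> R x) -> is_ideal R I ->
  is_ideal S (fun x => I x /\ S x).
Proof.
move=> subS SR [IR [I0 ID IB Il Ir]]; have [S0 _ SD _ SM] := subS.
split=> [x [] //|]; split=> [//|x y [? ?] [? ?]|x y [? ?] [? ?]|r x Sr [? ?]|r x Sr [? ?]].
- by split; [apply: ID | apply: SD].
- by split; [apply: IB | apply: subalgB].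
- by split; [apply: Il; first apply: SR | apply: SM].
- by split; [apply: Ir; first apply: SR | apply: SM].
Qed.

Lemma gen_ideal_sub R I J y :
  is_ideal R I -> (forall x, J x -> I x) -> gen_ideal R J y -> I y.
Proof.
case=> _ [I0 ID _ Il Ir] JI [n [r [x [t [hj ->]]]]].
apply: (big_ind I) => // j _; have [Rr [Jx Rt]] := hj j.
by apply: Ir => //; apply: Il => //; apply: JI.
Qed.

Lemma gen_ideal_self R J x : R 1 -> J x -> gen_ideal R J x.
Proof.
move=> R1 Jx; exists 1%N, (fun=> 1), (fun=> x), (fun=> 1).
by split=> [//|]; rewrite big_ord1 mul1r mulr1.
Qed.

Variable A' : E -> Prop.

Lemma NE0P b : NE A' 0 b <-> forall a, A' a -> ad a b = 0.
Proof.
split=> [NEb a A'a | adb [|a [|c s]] //= _ sA'].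
  by apply: (NEb [:: a]) => // c; rewrite inE => /eqP ->.
by apply: adb; apply: sA'; apply: mem_head.
Qed.

Lemma NES_ad i a b : A' a -> NE A' i.+1 b -> NE A' i (ad a b).
Proof.
move=> A'a NEb s size_s sA'; rewrite /ad_seq -foldr_rcons; apply: NEb.
  by rewrite size_rcons size_s.
by move=> c; rewrite mem_rcons inE => /orP [/eqP ->|] //; apply: sA'.
Qed.

Lemma NE0_Delta_inv R b : (R b /\ NE A' 0 b) <-> Delta_inv A' R b.
Proof. by split=> -[Rb]; split=> //; apply/NE0P. Qed.

Lemma subalg_NE0 : is_subalg (NE A' 0).
Proof.
split.
- by apply/NE0P => a _; apply: ad0.
- by apply/NE0P => a _; apply: ad_comm; rewrite /GRing.comm mulr1 mul1r.
- move=> x y /NE0P NEx /NE0P NEy; apply/NE0P => a A'a.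
  by rewrite adD NEx ?NEy ?addr0.
- by move=> k x /NE0P NEx; apply/NE0P => a A'a; rewrite adZ NEx ?scaler0.
- move=> x y /NE0P NEx /NE0P NEy; apply/NE0P => a A'a.
  by rewrite adM NEx ?NEy ?mul0r ?mulr0 ?addr0.
Qed.

Lemma NE0_ad_comm r x :
  (forall a, A' a -> GRing.comm (ad a r) x) -> NE A' 0 x -> NE A' 0 (ad r x).
Proof.
move=> comm_x /NE0P NEx; apply/NE0P => a A'a.
by rewrite ad_ad (NEx a A'a) ad0 addr0 ad_comm //; apply: comm_x.
Qed.

(* Classical: whether some [ad_a] fails to kill [x] is not decidable. *)
Lemma Delta_stable_NE0_nonzero I i x :
  Delta_stable A' I -> I x -> x != 0 -> NE A' i x ->
  exists y, I y /\ y != 0 /\ NE A' 0 y.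
Proof.
move=> stI; elim: i x => [|i IHi] x Ix x_neq0 NEx; first by exists x.
have [[a [A'a ax_neq0]] | no_a] := classic (exists a, A' a /\ ad a x != 0).
  by apply: (IHi (ad a x)); [apply: stI | | apply: NES_ad].
exists x; split=> //; split=> //; apply/NE0P => a A'a.
by apply/eqP/negPn/negP => ax_neq0; apply: no_a; exists a.
Qed.

End Adjoint.

Theorem corollary2p1 (K : fieldType) (E : algType K)
    (A A' R : E -> Prop) :
  is_subalg A -> is_comm A ->
  (forall a, A' a -> A a) -> (exists a, A' a) ->
  is_subalg R -> (forall r, R r -> NEall A' r) -> (forall a, A a -> R a) ->
  let Ri := fun (i : nat) (b : E) => R b /\ NE A' i b in
  (* (1) *)
  (Delta_loc_nilp A' R /\ (forall i b, NB A' R i b <-> Ri i b)) /\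
  (* (2) *)
  (forall I : E -> Prop, is_ideal R I -> nonzero_set I ->
     let I0 := fun x => I x /\ Ri 0%N x in
     (forall x, Ri 0%N x <-> Delta_inv A' R x) /\
     (forall x, I0 x <-> I x /\ Delta_inv A' R x) /\
     (forall a, A a -> Ri 0%N a) /\
     is_ideal (Ri 0%N) I0 /\ nonzero_set I0 /\
     (forall x, (gen_ideal R I0 x /\ Ri 0%N x) <-> I0 x) /\
     (* (3) *)
     (is_comm (Ri 0%N) ->
        forall r x, Ri 1%N r -> I0 x -> I0 (r * x - x * r))).
Proof.
move=> _ commA A'A _ subR NER AR Ri.
have A'R a : A' a -> R a by move/A'A/AR.
have subR0 : is_subalg (Ri 0%N) := subalgI subR (subalg_NE0 A').
split.
  split=> [|i b]; last exact: iff_refl.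
  split=> [a b /A'R Ra Rb | b Rb]; first exact: subalg_ad.
  by have [i NEb] := NER b Rb; exists i.
move=> I idI [x0 [Ix0 x0_neq0]] I0; have [RI _] := idI.
do 2![split; first by move=> x; rewrite -NE0_Delta_inv].
split; first by move=> a Aa; split; [apply: AR | apply/NE0P => c /A'A Ac; apply/ad_comm/commA].
split; first by apply: (ideal_restrict _ _ idI) => // x [].
split.
  have [i NEx0] := NER x0 (RI _ Ix0).
  have stI : Delta_stable A' I by move=> a x /A'R; apply: ideal_ad.
  have [y [Iy [y_neq0 NEy]]] := Delta_stable_NE0_nonzero stI Ix0 x0_neq0 NEx0.
  by exists y; split=> //; split=> //; split=> //; apply: RI.
split=> [x|commR0 r x [Rr NEr] [Ix [Rx NEx]]].
  split=> [[gen_x R0x] | I0x]; first by split=> //; apply: (gen_ideal_sub idI _ gen_x) => y [].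
  by have [_ R1 _ _ _] := subR; split; [apply: gen_ideal_self | case: I0x].
split; first exact: (ideal_ad idI).
split; first exact: subalg_ad.
apply: (NE0_ad_comm _ NEx) => a A'a; apply: commR0; last by split.
by split; [apply: subalg_ad => //; apply: A'R | apply: NES_ad].
Qed.
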